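(* Let $\beta\in\mathbb{N}^n$. The linear operators on $\mathbb{C}[z_1,\ldots,z_n]$ defined by $z^\alpha\mapsto J(\alpha,\beta)z^\alpha$ ($\alpha\in\mathbb{N}^n$) and by $z^\alpha\mapsto(\beta)_\alpha z^\alpha$ ($\alpha\in\mathbb{N}^n$) preserve stability.
   Context: $H=\{z\in\mathbb{C}:\Im(z)>0\}$; a polynomial is stable if it is non-zero whenever all variables lie in $H$; a linear operator preserves stability if it maps each stable polynomial to a stable polynomial or to $0$. $(\beta)_\alpha=\beta!/(\beta-\alpha)!=\prod_i\beta_i!/(\beta_i-\alpha_i)!$ if $\alpha_i\le\beta_i$ for all $i$, and $0$ otherwise. $J(\alpha,\beta)=(\beta)_\alpha\beta^{-\alpha}$ with $\beta^{-\alpha}=\prod_i\beta_i^{-\alpha_i}$, using the convention $k^{\pm k}=1$ for $k=0$. *)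

From HB Require Import structures.
From mathcomp Require Import all_boot all_order all_algebra.
From mathcomp Require Import complex.
From mathcomp Require Import mpoly.
Set Implicit Arguments. Unset Strict Implicit. Unset Printing Implicit Defensive.
Import Order.TTheory GRing.Theory Num.Theory.
Local Open Scope ring_scope.

(* The complex numbers are R[i] for a real closed field R (R = the reals gives C). *)

Definition stable (R : rcfType) (n : nat) (p : {mpoly R[i][n]}) : Prop :=
  forall z : 'I_n -> R[i], (forall i, 0 < complex.Im (z i)) -> p.@[z] != 0.

Definition preserves_stability (R : rcfType) (n : nat)
  (T : {mpoly R[i][n]} -> {mpoly R[i][n]}) : Prop :=
  forall p, stable p -> T p = 0 \/ stable (T p).

(* (beta)_alpha = prod_i beta_i!/(beta_i-alpha_i)!  (0 unless alpha <= beta);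
   ffact (b ^_ a) is exactly b!/(b-a)! if a <= b and 0 otherwise. *)
Definition pochf (n : nat) (alpha beta : 'X_{1..n}) : nat :=
  \prod_(i < n) (beta i ^_ alpha i)%N.

(* J(alpha,beta) = (beta)_alpha * prod_i beta_i^{-alpha_i}; note 0^{-0} = 1 and
   when beta_i = 0 < alpha_i the factor (beta)_alpha vanishes anyway. *)
Definition Jcoef (F : fieldType) (n : nat) (alpha beta : 'X_{1..n}) : F :=
  (pochf alpha beta)%:R * \prod_(i < n) ((beta i)%:R ^- alpha i).

Definition diag_op (F : fieldType) (n : nat) (c : 'X_{1..n} -> F)
  (p : {mpoly F[n]}) : {mpoly F[n]} :=
  \sum_(m <- msupp p) (c m * p@_m) *: 'X_[m].

(* Both operators are products over the coordinates i of the operators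
   z^alpha |-> (b)_(alpha_i) z^alpha with b = beta_i, and J differs from (beta)_alpha
   by the stability-preserving rescaling z_i |-> z_i / beta_i; so it suffices to treat
   one coordinate.  Freeze the other variables in the upper half-plane and write
   p = t^L q(t) in t = z_i, where L is the least z_i-degree occurring in p.  Then
   sum_k q_k (b)_(L+k) t^(L+k) = (b)_L t^b [q(d/ds) s^(b-L)](1/t).  The roots r of q
   satisfy r <> 0 and Im r <= 0, and each factor d/ds - r keeps a polynomial free of
   zeros in the lower half-plane, because there its logarithmic derivative has positive
   imaginary part; as Im (1/t) < 0 the value is nonzero.
   That q(0) <> 0, i.e. that the z_i^L-part of p is stable, is a Hurwitz-type fact: it
   is the limit as x -> 0+ of the stable polynomials x^-L p(.., x z_i, ..), and a
   polynomial f without zeros in the disc |s| < d satisfies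
   |f(s)| <= (1 + |s|/d)^deg f |f(0)|, a bound that passes to the limit. *)

From HB Require Import structures.
From mathcomp Require Import all_boot all_order all_algebra.
From mathcomp Require Import complex.
From mathcomp Require Import mpoly.
From mathcomp Require Import ring lra.
Set Implicit Arguments. Unset Strict Implicit. Unset Printing Implicit Defensive.
Import Order.TTheory GRing.Theory Num.Theory Normc.
Local Open Scope ring_scope.

Section DiagOp.
Variables (F : fieldType) (n : nat).
Implicit Types (p : {mpoly F[n]}) (c : 'X_{1..n} -> F).

Lemma mcoeff_diag_op c p m : (diag_op c p)@_m = c m * p@_m.
Proof.
rewrite /diag_op raddf_sum /=.
under eq_bigr => k _ do rewrite mcoeffZ mcoeffX.
have [pm|pm] := boolP (m \in msupp p).
  rewrite (bigD1_seq m) //= eqxx mulr1 big1 ?addr0 // => k /negbTE ->.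
  by rewrite mulr0.
rewrite big1_seq ?(memN_msupp_eq0 pm) ?mulr0 // => k pk.
by case: eqP pk => [->|]; rewrite ?(negbTE pm) ?mulr0.
Qed.

Lemma meval_diag_op c p z :
  (diag_op c p).@[z] = \sum_(m <- msupp p) c m * p@_m * \prod_i z i ^+ m i.
Proof. by rewrite /diag_op raddf_sum /=; apply: eq_bigr => m _; rewrite mevalZ mevalX. Qed.

Lemma eq_in_diag_op c1 c2 p :
  {in msupp p, c1 =1 c2} -> diag_op c1 p = diag_op c2 p.
Proof.
move=> eq_c; apply/mpolyP => m; rewrite !mcoeff_diag_op.
by have [/eq_c ->|/memN_msupp_eq0 ->] := boolP (m \in msupp p); rewrite ?mulr0.
Qed.

Lemma diag_op_comp c1 c2 p :
  diag_op c1 (diag_op c2 p) = diag_op (fun m => c1 m * c2 m) p.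
Proof. by apply/mpolyP => m; rewrite !mcoeff_diag_op mulrA. Qed.

Lemma diag_opZ k c p : diag_op (fun m => k * c m) p = k *: diag_op c p.
Proof. by apply/mpolyP => m; rewrite mcoeffZ !mcoeff_diag_op mulrA. Qed.

Lemma diag_op0 c : diag_op c 0 = 0.
Proof. by apply/mpolyP => m; rewrite mcoeff_diag_op mcoeff0 mulr0. Qed.

Lemma diag_op1 p : diag_op (fun=> 1) p = p.
Proof. by apply/mpolyP => m; rewrite mcoeff_diag_op mul1r. Qed.

Lemma meval_diag_op_prod (mu z : 'I_n -> F) p :
  (diag_op (fun m => \prod_i mu i ^+ m i) p).@[z] = p.@[fun i => mu i * z i].
Proof.
rewrite meval_diag_op mevalE; apply: eq_bigr => m _.
rewrite [_ * p@_m]mulrC -mulrA; congr (_ * _); rewrite -big_split /=.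
by apply: eq_bigr => i _; rewrite exprMn.
Qed.

End DiagOp.

Section ComplexFacts.
Variable R : rcfType.
Local Notation C := R[i].
Local Notation Im := (@complex.Im R).
Implicit Types (x : C) (k : R).

Lemma Im_realM k x : Im (k%:C%C * x) = k * Im x.
Proof. by case: x => a b /=; rewrite mul0r addr0. Qed.

Lemma Im_inv_gt0 x : Im x < 0 -> 0 < Im x^-1.
Proof.
case: x => a b /= b_lt0; rewrite oppr_gt0 pmulr_llt0 // invr_gt0.
by rewrite ltr_wpDl ?sqr_ge0 // exprn_even_gt0 //= lt_eqF.
Qed.

Lemma Im_inv_lt0 x : 0 < Im x -> Im x^-1 < 0.
Proof. by move=> x_gt0; rewrite -oppr_gt0 -raddfN -invrN Im_inv_gt0 // raddfN oppr_lt0. Qed.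

Lemma normc_ge0 x : 0 <= normc x.
Proof. by case: x => a b; apply: sqrtr_ge0. Qed.

Lemma normc_real k : normc k%:C%C = `|k|.
Proof. by rewrite /normc /= expr0n addr0 sqrtr_sqr. Qed.

Lemma normcX x m : normc (x ^+ m) = normc x ^+ m.
Proof. by elim: m => [|m IH]; rewrite ?normc1 // !exprS normcM IH. Qed.

Lemma normc_sum (I : Type) (s : seq I) (f : I -> C) :
  normc (\sum_(j <- s) f j) <= \sum_(j <- s) normc (f j).
Proof.
elim: s => [|j s IH]; first by rewrite !big_nil normc0.
by rewrite !big_cons (le_trans (le_normcD _ _)) ?lerD2l.
Qed.

Lemma normc_prod (I : Type) (s : seq I) (f : I -> C) :
  normc (\prod_(j <- s) f j) = \prod_(j <- s) normc (f j).
Proof. by elim: s => [|j s IH]; rewrite ?big_nil ?normc1 // !big_cons normcM IH. Qed.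

Lemma Im_ge_normcN x : - normc x <= Im x.
Proof.
case: x => a b /=; rewrite lerNl; apply: le_trans (ler_norm _) _.
by rewrite normrN -sqrtr_sqr ler_sqrt ?lerDr ?sqr_ge0 // addr_ge0 ?sqr_ge0.
Qed.

End ComplexFacts.

Section StabilityBasics.
Variables (R : rcfType) (n : nat).
Local Notation C := R[i].
Local Notation Im := (@complex.Im R).
Implicit Types (p : {mpoly C[n]}) (c : 'X_{1..n} -> C) (z : 'I_n -> C).

Definition set_coord z (i : 'I_n) (t : C) : 'I_n -> C :=
  fun j => if j == i then t else z j.

Lemma set_coord_id z i : set_coord z i (z i) =1 z.
Proof. by move=> j; rewrite /set_coord; case: eqP => // ->. Qed.

Lemma prod_set_coord z i t (m : 'X_{1..n}) :
  \prod_j set_coord z i t j ^+ m j = t ^+ m i * \prod_j set_coord z i 1 j ^+ m j.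
Proof.
rewrite (bigD1 i) // [in RHS](bigD1 i) //= /set_coord !eqxx expr1n mul1r.
by congr (_ * _); apply: eq_bigr => j /negbTE ->.
Qed.

Lemma upper_set_coord z i t :
  (forall j, 0 < Im (z j)) -> 0 < Im t -> forall j, 0 < Im (set_coord z i t j).
Proof. by move=> z_up t_up j; rewrite /set_coord; case: eqP. Qed.

Lemma stable_neq0 p : stable p -> p != 0.
Proof.
move=> p_st; apply: contraTneq (p_st (fun=> 'i%C) (fun=> ltr01)) => ->.
by rewrite meval0 eqxx.
Qed.

Lemma eq_preserves_stability_diag_op c1 c2 : c1 =1 c2 ->
  preserves_stability (diag_op c1) -> preserves_stability (diag_op c2).
Proof.
by move=> eq_c st1 p p_st; rewrite -(eq_in_diag_op (in1W eq_c)); apply: st1.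
Qed.

Lemma preserves_stability_diag_opM c1 c2 :
  preserves_stability (diag_op c1) -> preserves_stability (diag_op c2) ->
  preserves_stability (diag_op (fun m => c1 m * c2 m)).
Proof.
move=> st1 st2 p p_st; rewrite -diag_op_comp.
by case: (st2 p p_st) => [->|]; [left; rewrite diag_op0 | apply: st1].
Qed.

Lemma preserves_stability_diag_op_prod (I : Type) (s : seq I)
    (c : I -> 'X_{1..n} -> C) :
  (forall k, preserves_stability (diag_op (c k))) ->
  preserves_stability (diag_op (fun m => \prod_(k <- s) c k m)).
Proof.
move=> st_c; elim: s => [|k s IH] p p_st.
  by right; under eq_in_diag_op do rewrite big_nil; rewrite diag_op1.
under eq_in_diag_op do rewrite big_cons.
exact: preserves_stability_diag_opM.
Qed.

Lemma stable_diag_op_scale (mu : 'I_n -> R) p : (forall i, 0 < mu i) ->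
  stable p -> stable (diag_op (fun m => \prod_i (mu i)%:C%C ^+ m i) p).
Proof.
move=> mu_gt0 p_st z z_up; rewrite meval_diag_op_prod.
by apply: p_st => j; rewrite Im_realM mulr_gt0.
Qed.

Lemma preserves_stability_scale (mu : 'I_n -> R) : (forall i, 0 < mu i) ->
  preserves_stability (diag_op (fun m => \prod_i (mu i)%:C%C ^+ m i)).
Proof. by move=> mu_gt0 p p_st; right; apply: stable_diag_op_scale. Qed.

End StabilityBasics.

Section DiffOp.
Variable F : nzRingType.
Implicit Types (q h : {poly F}).

Definition diffop q h : {poly F} := \sum_(k < size q) q`_k *: h^`(k).

Lemma diffopE N q h : (size q <= N)%N ->
  diffop q h = \sum_(k < N) q`_k *: h^`(k).
Proof.
move=> le_qN; rewrite /diffop (big_ord_widen N (fun k => q`_k *: h^`(k))) //.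
rewrite big_mkcond; apply: eq_bigr => k _.
by case: ltnP => // /(nth_default 0) ->; rewrite scale0r.
Qed.

Lemma diffopD q1 q2 h : diffop (q1 + q2) h = diffop q1 h + diffop q2 h.
Proof.
set N := maxn (size q1) (size q2).
rewrite !(@diffopE N) ?leq_maxl ?leq_maxr ?(leq_trans (size_polyD _ _)) //.
by rewrite -big_split; apply: eq_bigr => k _; rewrite coefD scalerDl.
Qed.

Lemma diffop0 h : diffop 0 h = 0.
Proof. by rewrite /diffop size_poly0 big_ord0. Qed.

Lemma diffop_sum (I : Type) (s : seq I) (f : I -> {poly F}) h :
  diffop (\sum_(x <- s) f x) h = \sum_(x <- s) diffop (f x) h.
Proof. exact: (big_morph (diffop ^~ h) (fun q1 q2 => diffopD q1 q2 h) (diffop0 h)). Qed.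

Lemma diffopZ a q h : diffop (a *: q) h = a *: diffop q h.
Proof.
rewrite !(@diffopE (size q)) ?size_scale_leq // scaler_sumr.
by apply: eq_bigr => k _; rewrite coefZ scalerA.
Qed.

Lemma diffop1 h : diffop 1 h = h.
Proof. by rewrite (@diffopE 1) ?size_poly1 // big_ord1 coef1 scale1r. Qed.

Lemma diffopXM q h : diffop ('X * q) h = (diffop q h)^`().
Proof.
rewrite (@diffopE (size q).+1); last by rewrite (leq_trans (size_polyMleq _ _)) // size_polyX.
rewrite big_ord_recl coefXM eqxx scale0r add0r (@diffopE (size q)) // raddf_sum.
by apply: eq_bigr => k _; rewrite coefXM /= derivZ -derivnS.
Qed.

Lemma diffopXsubC r q h :
  diffop (('X - r%:P) * q) h = (diffop q h)^`() - r *: diffop q h.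
Proof.
by rewrite mulrBl mul_polyC -scaleNr diffopD diffopXM diffopZ scaleNr.
Qed.

Lemma diffop_XnXn e b : diffop 'X^e ('X^b : {poly F}) = 'X^(b - e) *+ b ^_ e.
Proof.
rewrite (@diffopE e.+1) ?size_polyXn // big_ord_recr /= coefXn eqxx scale1r.
by rewrite big1 ?add0r ?derivnXn // => k _; rewrite coefXn ltn_eqF ?scale0r.
Qed.

End DiffOp.

Section DiffOpZeros.
Variable R : rcfType.
Local Notation C := R[i].
Local Notation Im := (@complex.Im R).
Implicit Types (q h : {poly C}) (rs : seq C).

Definition lower_zero_free h := forall w, Im w < 0 -> h.[w] != 0.

Lemma horner_diffop_XnXn_inv (t : C) e b : t != 0 ->
  (diffop 'X^e 'X^b).[t^-1] * t ^+ b = (b ^_ e)%:R * t ^+ e.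
Proof.
move=> t_neq0; rewrite diffop_XnXn; have [le_eb|lt_be] := leqP e b.
  rewrite hornerMn hornerXn -mulr_natl -mulrA; congr (_ * _).
  by rewrite -{2}(subnK le_eb) exprD exprVn mulrA mulVf ?mul1r ?expf_neq0.
by rewrite ffact_small // mulr0n horner0 !mul0r.
Qed.

Lemma root_prod_XsubC_mem rs a : a \in rs -> (\prod_(b <- rs) ('X - b%:P)).[a] = 0.
Proof. by move=> a_rs; apply/rootP; rewrite root_prod_XsubC. Qed.

Lemma horner_prod_XsubC_neq0 rs w :
  Im w < 0 -> (forall a, a \in rs -> 0 <= Im a) ->
  (\prod_(a <- rs) ('X - a%:P)).[w] != 0.
Proof.
move=> w_lt0 rs_up; rewrite horner_prod prodf_seq_neq0; apply/allP => a a_rs.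
rewrite hornerXsubC; apply: contraTneq w_lt0 => /eqP; rewrite subr_eq0 => /eqP->.
by rewrite -leNgt rs_up.
Qed.

Lemma Im_logderiv_prod_XsubC_gt0 rs w :
  Im w < 0 -> (forall a, a \in rs -> 0 <= Im a) -> rs != [::] ->
  0 < Im ((\prod_(a <- rs) ('X - a%:P))^`().[w] / (\prod_(a <- rs) ('X - a%:P)).[w]).
Proof.
move=> w_lt0; elim: rs => [//|a rs IH] ars_up _.
have rs_up a' : a' \in rs -> 0 <= Im a'.
  by move=> a'_rs; apply: ars_up; rewrite in_cons a'_rs orbT.
have wa_lt0 : Im (w - a) < 0.
  by rewrite raddfB subr_lt0 (lt_le_trans w_lt0) // ars_up ?mem_head.
have wa_neq0 : w - a != 0 by apply: contraTneq wa_lt0 => ->; rewrite raddf0 ltxx.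
have Qw_neq0 := horner_prod_XsubC_neq0 w_lt0 rs_up.
set Q := \prod_(b <- rs) _ in IH Qw_neq0 *.
rewrite big_cons derivM derivXsubC mul1r !hornerE.
have -> : (Q.[w] + (w - a) * Q^`().[w]) / ((w - a) * Q.[w]) =
          (w - a)^-1 + Q^`().[w] / Q.[w] by field; rewrite wa_neq0 Qw_neq0.
rewrite raddfD /=; have wa_inv := Im_inv_gt0 wa_lt0.
case: (altP (rs =P [::])) => [rs_nil|/(IH rs_up) ?]; last exact: addr_gt0.
by rewrite /Q rs_nil big_nil derivC horner0 mul0r raddf0 addr0.
Qed.

Lemma lower_zero_free_deriv_subZ h r :
  h != 0 -> lower_zero_free h -> r != 0 -> Im r <= 0 ->
  h^`() - r *: h != 0 /\ lower_zero_free (h^`() - r *: h).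
Proof.
move=> h_neq0 h_lzf r_neq0 r_le0; split.
  apply: contraTneq (lt_size_deriv h_neq0) => /eqP; rewrite subr_eq0 => /eqP->.
  by rewrite size_scale // ltnn.
move=> w w_lt0; apply/eqP; rewrite !hornerE => /eqP; rewrite subr_eq0 => /eqP hw.
have [rs h_def] := closed_field_poly_normal h.
have lc_neq0 : lead_coef h != 0 by rewrite lead_coef_eq0.
have rs_up a : a \in rs -> 0 <= Im a.
  move=> a_rs; rewrite leNgt; apply/negP => /h_lzf.
  by rewrite h_def hornerZ root_prod_XsubC_mem // mulr0 eqxx.
have Pw_neq0 := horner_prod_XsubC_neq0 w_lt0 rs_up.
set P := \prod_(a <- rs) _ in h_def Pw_neq0.
(* at a zero w of h' - r h, the constant r is the logarithmic derivative of h at w *)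
have r_def : r = P^`().[w] / P.[w].
  apply: (mulIf Pw_neq0); rewrite divfK //; apply: (mulfI lc_neq0).
  by rewrite h_def derivZ !hornerZ in hw; rewrite hw mulrCA.
have [rs_nil|rs_cons] := eqVneq rs [::].
  by move: r_neq0; rewrite r_def /P rs_nil big_nil derivC horner0 mul0r eqxx.
by move: r_le0; rewrite r_def leNgt Im_logderiv_prod_XsubC_gt0.
Qed.

Lemma lower_zero_free_diffop_Xn q b :
  q.[0] != 0 -> (forall s, 0 < Im s -> q.[s] != 0) -> lower_zero_free (diffop q 'X^b).
Proof.
move=> q0_neq0 q_uzf.
have [rs q_def] := closed_field_poly_normal q.
have rs_ok a : a \in rs -> a != 0 /\ Im a <= 0.
  have qa0 : a \in rs -> q.[a] = 0 by move=> ?; rewrite q_def hornerZ root_prod_XsubC_mem ?mulr0.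
  move=> /qa0 qa; split; first by apply: contraNneq q0_neq0 => a0; rewrite a0 in qa; rewrite qa.
  by rewrite leNgt; apply/negP => /q_uzf; rewrite qa eqxx.
rewrite q_def diffopZ => w w_lt0; rewrite hornerZ mulf_neq0 //.
  by rewrite lead_coef_eq0; apply: contraNneq q0_neq0 => ->; rewrite horner0.
suff [] : diffop (\prod_(a <- rs) ('X - a%:P)) 'X^b != 0 /\
          lower_zero_free (diffop (\prod_(a <- rs) ('X - a%:P)) 'X^b) by move=> _; apply.
elim: rs rs_ok {q_def} => [|a rs IH] rs_ok.
  rewrite big_nil diffop1 monic_neq0 ?monicXn //; split => // v v_lt0.
  by rewrite hornerXn expf_neq0 //; apply: contraTneq v_lt0 => ->; rewrite raddf0 ltxx.
have [a_neq0 a_le0] := rs_ok a (mem_head _ _).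
have [IH1 IH2] := IH (fun a' a'_rs => rs_ok a' (mem_behead (s := a :: rs) a'_rs)).
by rewrite big_cons diffopXsubC; apply: lower_zero_free_deriv_subZ.
Qed.

End DiffOpZeros.

Section UnivariateBounds.
Variable R : rcfType.
Local Notation C := R[i].
Implicit Types (f g : {poly C}).

Lemma normc_horner_zero_free_disk f (d : R) N (s : C) :
  0 < d -> (forall w, normc w < d -> f.[w] != 0) -> (size f <= N.+1)%N ->
  normc f.[s] <= (1 + normc s / d) ^+ N * normc f.[0].
Proof.
move=> d_gt0 f_zf le_fN.
have f0_neq0 : f.[0] != 0 by apply: f_zf; rewrite normc0.
have f_neq0 : f != 0 by apply: contraNneq f0_neq0 => ->; rewrite horner0.
have [rs f_def] := closed_field_poly_normal f.
have rs_far r : r \in rs -> d <= normc r.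
  move=> r_rs; rewrite leNgt; apply/negP => /f_zf.
  by rewrite f_def hornerZ root_prod_XsubC_mem // mulr0 eqxx.
have le_rsN : (size rs <= N)%N.
  by move: le_fN; rewrite f_def size_scale ?lead_coef_eq0 // size_prod_XsubC.
set K := 1 + normc s / d.
have K_ge1 : 1 <= K by rewrite lerDl divr_ge0 ?normc_ge0 // ltW.
rewrite f_def !hornerZ !normcM !horner_prod !normc_prod mulrCA ler_wpM2l ?normc_ge0 //.
apply: (@le_trans _ _ (\prod_(r <- rs) (K * normc (0 - r)))).
  rewrite big_seq [X in _ <= X]big_seq; apply: ler_prod => r r_rs.
  rewrite normc_ge0 !hornerXsubC add0r normcN (le_trans (le_normcD _ _)) // normcN.
  rewrite /K mulrDl mul1r addrC lerD2l -mulrA ler_peMr ?normc_ge0 //.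
  by rewrite mulrC ler_pdivlMr // mul1r rs_far.
rewrite big_split /= big_const_seq count_predT iter_mulr_1.
under [X in _ <= _ * X]eq_bigr do rewrite hornerXsubC.
by rewrite ler_wpM2r ?ler_weXn2l // prodr_ge0 // => r _; rewrite normc_ge0.
Qed.

Lemma normc_horner_sub_horner0 f (x : R) : 0 <= x <= 1 ->
  normc (f.[x%:C%C] - f.[0]) <= x * \sum_(k < size f) normc f`_k.
Proof.
case/andP => x_ge0 x_le1; rewrite !horner_coef -sumrB mulr_sumr.
apply: le_trans; first exact: normc_sum.
apply: ler_sum => k _.
rewrite -mulrBr normcM mulrC ler_wpM2r ?normc_ge0 //.
case: (nat_of_ord k) => [|j]; first by rewrite !expr0 subrr normc0.
rewrite expr0n subr0 normcX normc_real ger0_norm // exprS ler_piMr ?exprn_ge0 //.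
by rewrite exprn_ile1.
Qed.

Lemma normc_horner0_le f g (K : R) : 0 <= K ->
  (forall x : R, 0 < x -> normc f.[x%:C%C] <= K * normc g.[x%:C%C]) ->
  normc f.[0] <= K * normc g.[0].
Proof.
move=> K_ge0 le_fg; set Mf := \sum_(k < size f) normc f`_k.
set Mg := \sum_(k < size g) normc g`_k.
have Mf_ge0 : 0 <= Mf by rewrite sumr_ge0 // => k _; rewrite normc_ge0.
have Mg_ge0 : 0 <= Mg by rewrite sumr_ge0 // => k _; rewrite normc_ge0.
apply/ler_addgt0Pr => e e_gt0; pose x := Num.min 1 (e / (Mf + K * Mg + 1)).
have M_gt0 : 0 < Mf + K * Mg + 1 by rewrite ltr_wpDl ?addr_ge0 ?mulr_ge0.
have x_gt0 : 0 < x by rewrite lt_min ltr01 divr_gt0.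
have x01 : 0 <= x <= 1 by rewrite ltW //= ge_min lexx.
have xM_le : x * (Mf + K * Mg + 1) <= e by rewrite -ler_pdivlMr // ge_min lexx orbT.
have near_f : normc (f.[0] - f.[x%:C%C]) <= x * Mf.
  by rewrite -opprB normcN normc_horner_sub_horner0.
have near_g : K * normc (g.[x%:C%C] - g.[0]) <= K * (x * Mg).
  by rewrite ler_wpM2l // normc_horner_sub_horner0.
have := le_normcD f.[x%:C%C] (f.[0] - f.[x%:C%C]); rewrite addrC subrK => f0_le.
have Kgx_le : K * normc g.[x%:C%C] <= K * normc g.[0] + K * normc (g.[x%:C%C] - g.[0]).
  by rewrite -mulrDr ler_wpM2l // -{1}(subrK g.[0] g.[x%:C%C]) addrC le_normcD.
have := le_fg x x_gt0; nra.
Qed.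

Lemma poly_eq0_on_interval f (d : R) :
  0 < d -> (forall x : R, 0 < x -> x < d -> f.[x%:C%C] = 0) -> f = 0.
Proof.
move=> d_gt0 f_zero; pose pts := [seq (d / k.+2%:R)%:C%C | k <- iota 0 (size f)].
apply: (@roots_geq_poly_eq0 _ _ pts); last by rewrite size_map size_iota.
  apply/allP => _ /mapP[k _ ->]; apply/rootP/f_zero; first by rewrite divr_gt0.
  by rewrite ltr_pdivrMr // ltr_pMr // ltr1n.
rewrite map_inj_uniq ?iota_uniq // => k l /complexI /(mulfI (lt0r_neq0 d_gt0)).
by move/invr_inj/eqP; rewrite eqr_nat !eqSS => /eqP.
Qed.

End UnivariateBounds.

Lemma sum_digits_inj k D (f g : 'I_k -> nat) :
  (forall j, f j < D)%N -> (forall j, g j < D)%N ->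
  (\sum_j f j * D ^ j = \sum_j g j * D ^ j)%N -> f =1 g.
Proof.
elim: k f g => [|k IH] f g f_lt g_lt; first by move=> _ [].
have D_gt0 : (0 < D)%N by apply: leq_ltn_trans (f_lt ord0).
have shift (h : 'I_k.+1 -> nat) :
    (\sum_(j < k) h (lift ord0 j) * D ^ (bump 0 j) =
     (\sum_(j < k) h (lift ord0 j) * D ^ j) * D)%N.
  by rewrite big_distrl /=; apply: eq_bigr => j _; rewrite expnS mulnCA mulnC.
rewrite !big_ord_recl /= !expn0 !muln1 !shift => eq_fg.
have eq0 : f ord0 = g ord0.
  by have := congr1 (modn ^~ D) eq_fg; rewrite /= ![(_ + _ * D)%N]addnC !modnMDl !modn_small.
have eqS : (\sum_(j < k) f (lift ord0 j) * D ^ j = \sum_(j < k) g (lift ord0 j) * D ^ j)%N.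
  by have := congr1 (divn ^~ D) eq_fg; rewrite /= !divnDMl // !divn_small ?add0n.
move=> j; case: (unliftP ord0 j) => [j' ->|->] //.
exact: (IH (fun j => f (lift ord0 j)) (fun j => g (lift ord0 j))).
Qed.

Section UpperHalfSpace.
Variables (R : rcfType) (n : nat).
Local Notation C := R[i].
Local Notation Im := (@complex.Im R).

Lemma mpoly_eq0_upper (q : {mpoly C[n]}) :
  (forall z, (forall j, 0 < Im (z j)) -> q.@[z] = 0) -> q = 0.
Proof.
move=> q_vanish; set D := msize q.
have lt_D m j : m \in msupp q -> (m j < D)%N.
  move=> m_supp; apply: leq_ltn_trans (msize_mdeg_lt m_supp).
  by rewrite mdegE (bigD1 j) //= leq_addr.
(* Kronecker substitution z_j = x^(D^j) i: distinct monomials of q become distinct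
   powers of x. *)
pose e (m : 'X_{1..n}) := (\sum_j m j * D ^ j)%N.
pose K : {poly C} := \sum_(m <- msupp q) (q@_m * 'i%C ^+ mdeg m) *: 'X^(e m).
have K_eq0 : K = 0.
  apply: (@poly_eq0_on_interval _ _ 1 ltr01) => x x_gt0 _.
  pose w j := ((x ^+ (D ^ j))%:C * 'i)%C.
  have w_up j : 0 < Im (w j) by rewrite /w ImiRe /= exprn_gt0.
  rewrite -(q_vanish w w_up) mevalE horner_sum; apply: eq_bigr => m _.
  rewrite hornerZ hornerXn -mulrA; congr (_ * _).
  under eq_bigr do rewrite /w exprMn -rmorphXn -exprM.
  rewrite big_split /= prodrXr mdegE -rmorph_prod prodrXr rmorphXn mulrC /e.
  by congr (_ * _ ^+ _); congr (_ ^+ _); apply: eq_bigr => j _; rewrite mulnC.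
apply/mpolyP => m; rewrite mcoeff0; apply/eqP; rewrite mcoeff_eq0.
apply/negP => m_supp; have := congr1 (fun f : {poly C} => f`_(e m)) K_eq0.
rewrite /K coef_sumMXn coef0 big_seq_cond (eq_bigl (pred1 m)); last first.
  move=> m'; apply/andP/eqP => [[m'_supp /eqP e_eq]|->]; last by rewrite eqxx.
  apply/mnmP => j; exact: (sum_digits_inj (lt_D m' ^~ m'_supp) (lt_D m ^~ m_supp) e_eq).
rewrite -big_filter filter_pred1_uniq ?msupp_uniq // big_seq1 => /eqP.
by rewrite mulf_eq0 mcoeff_eq0 m_supp expf_eq0 eq_complex /= oner_eq0 !andbF.
Qed.

Lemma upper_line_disk (z v : 'I_n -> C) : (forall j, 0 < Im (z j)) ->
  exists2 d : R, 0 < d & forall s, normc s < d -> forall j, 0 < Im (z j + s * v j).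
Proof.
move=> z_up; pose r j := Im (z j) / (normc (v j) + 1).
have nv_gt0 j : 0 < normc (v j) + 1 by rewrite ltr_wpDl ?normc_ge0.
exists (\big[Num.min/1]_j r j).
  by apply/bigmin_gtP; split => // j _; rewrite divr_gt0.
move=> s s_lt j; have := bigmin_le 1 j r; rewrite ler_pdivlMr // mulrDr mulr1 => le_d.
have := Im_ge_normcN (s * v j); rewrite normcM => Im_sv.
have : normc s * normc (v j) <= \big[Num.min/1]_j r j * normc (v j).
  by rewrite ler_wpM2r ?normc_ge0 // ltW.
have := normc_ge0 s; rewrite raddfD /=; lra.
Qed.

End UpperHalfSpace.

Section LineRestriction.
Variables (R : rcfType) (n : nat) (p : {mpoly R[i][n]}) (z v : 'I_n -> R[i]).
Local Notation C := R[i].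

Definition line_monomial (m : 'X_{1..n}) : {poly C} :=
  \prod_j ((z j)%:P + v j *: 'X) ^+ m j.

Definition line_poly (c : 'X_{1..n} -> C) : {poly C} :=
  \sum_(m <- msupp p) (c m * p@_m) *: line_monomial m.

Lemma horner_line_poly c s :
  (line_poly c).[s] = (diag_op c p).@[fun j => z j + s * v j].
Proof.
rewrite meval_diag_op horner_sum; apply: eq_bigr => m _.
rewrite hornerZ horner_prod; congr (_ * _); apply: eq_bigr => j _.
by rewrite horner_exp hornerD hornerC hornerZ hornerX mulrC.
Qed.

Lemma size_line_poly c :
  (size (line_poly c) <= \max_(m <- msupp p) size (line_monomial m))%N.
Proof.
apply: leq_trans; first exact: size_sum.
apply/bigmax_leqP_seq => m m_supp _.
by apply: leq_trans (size_scale_leq _ _) _; apply: leq_bigmax_seq.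
Qed.

Lemma horner_line_poly_exp (e : 'X_{1..n} -> nat) s y :
  (\sum_(m <- msupp p) (p@_m * (line_monomial m).[s]) *: 'X^(e m)).[y] =
  (line_poly (fun m => y ^+ e m)).[s].
Proof.
rewrite horner_sum /line_poly horner_sum; apply: eq_bigr => m _.
by rewrite !hornerZ hornerXn mulrC mulrA.
Qed.

End LineRestriction.

Section HurwitzLimit.
Variables (R : rcfType) (n : nat).
Local Notation C := R[i].
Local Notation Im := (@complex.Im R).
Implicit Types (p : {mpoly C[n]}) (e : 'X_{1..n} -> nat).

(* Hurwitz's argument along the complex line through z and w: near z the stable
   approximants have no zeros in a fixed disc, and the resulting growth bound
   survives the limit x -> 0+. *)
Lemma diag_op_limit_vanishing p e (z w : 'I_n -> C) :
  (forall x : R, 0 < x -> stable (diag_op (fun m => x%:C%C ^+ e m) p)) ->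
  (forall j, 0 < Im (z j)) -> (diag_op (fun m => 0 ^+ e m) p).@[z] = 0 ->
  (diag_op (fun m => 0 ^+ e m) p).@[w] = 0.
Proof.
move=> p_x_st z_up p0z; pose v j := w j - z j.
have [d d_gt0 line_up] := upper_line_disk v z_up.
set N := \max_(m <- msupp p) size (line_monomial z v m).
have line0 : (fun j => z j + 0 * v j) =1 z by move=> j; rewrite mul0r addr0.
have line1 : (fun j => z j + 1 * v j) =1 w by move=> j; rewrite mul1r addrC subrK.
suff G0_eq0 : line_poly p z v (fun m => 0 ^+ e m) = 0.
  by rewrite -(meval_eq _ line1) -horner_line_poly G0_eq0 horner0.
apply: (poly_eq0_on_interval d_gt0) => eta eta_gt0 eta_lt; apply/eq0_normc/eqP.
pose f s := \sum_(m <- msupp p) (p@_m * (line_monomial z v m).[s]) *: 'X^(e m).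
set K := (1 + normc eta%:C%C / d) ^+ N.
have K_ge0 : 0 <= K by rewrite exprn_ge0 // addr_ge0 // divr_ge0 ?normc_ge0 // ltW.
have := @normc_horner0_le _ (f eta%:C%C) (f 0) K K_ge0.
rewrite !horner_line_poly_exp !horner_line_poly (meval_eq _ line0) p0z normc0 mulr0.
rewrite eq_le normc_ge0 andbT; apply => x x_gt0; rewrite !horner_line_poly_exp.
apply: normc_horner_zero_free_disk => //.
  by move=> s s_lt; rewrite horner_line_poly; apply: p_x_st => //; apply: line_up.
exact: leq_trans (size_line_poly _ _ _ _) (leqnSn _).
Qed.

Lemma diag_op_limit_stable p e :
  (forall x : R, 0 < x -> stable (diag_op (fun m => x%:C%C ^+ e m) p)) ->
  diag_op (fun m => 0 ^+ e m) p = 0 \/ stable (diag_op (fun m => 0 ^+ e m) p).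
Proof.
move=> p_x_st; set p0 := diag_op _ p.
have [->|p0_neq0] := eqVneq p0 0; [by left | right].
move=> z z_up; apply: contra_neq p0_neq0 => p0z.
by apply: mpoly_eq0_upper => w _; apply: (diag_op_limit_vanishing w p_x_st z_up p0z).
Qed.

Lemma stable_scale_coord p (i : 'I_n) (x : R) : 0 < x -> stable p ->
  stable (diag_op (fun m => x%:C%C ^+ m i) p).
Proof.
move=> x_gt0 p_st; pose mu j := if j == i then x else 1.
rewrite (eq_in_diag_op (c2 := fun m => \prod_j (mu j)%:C%C ^+ m j)).
  by apply: stable_diag_op_scale p_st => j; rewrite /mu; case: eqP.
move=> m _; rewrite (bigD1 i) //= /mu eqxx big1 ?mulr1 // => j /negbTE ->.
by rewrite expr1n.
Qed.

(* The z_i^L-part of p is the limit, as x -> 0+, of x^-L p(.., x z_i, ..). *)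
Lemma stable_lowest_coord_part p (i : 'I_n) L :
  stable p -> {in msupp p, forall m : 'X_{1..n}, L <= m i}%N ->
  has (fun m : 'X_{1..n} => m i == L) (msupp p) ->
  stable (diag_op (fun m => 0 ^+ (m i - L)) p).
Proof.
move=> p_st le_L /hasP[m0 m0_supp /eqP m0L].
have p_x_st x : 0 < x -> stable (diag_op (fun m => x%:C%C ^+ (m i - L)) p).
  move=> x_gt0 z z_up; apply: contra_neq (stable_scale_coord i x_gt0 p_st z_up) => p_x_z.
  rewrite (eq_in_diag_op (c2 := fun m => x%:C%C ^+ L * x%:C%C ^+ (m i - L))).
    by rewrite diag_opZ mevalZ p_x_z mulr0.
  by move=> m m_supp; rewrite -exprD subnKC ?le_L.
have [p0_eq0|//] := diag_op_limit_stable p_x_st.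
have := congr1 (mcoeff m0) p0_eq0; rewrite mcoeff_diag_op mcoeff0 m0L subnn expr0 mul1r.
by move/eqP; rewrite mcoeff_eq0 m0_supp.
Qed.

End HurwitzLimit.

Lemma ffactD b l k : (b ^_ (l + k) = b ^_ l * (b - l) ^_ k)%N.
Proof.
elim: k => [|k IH]; first by rewrite addn0 ffactn0 muln1.
by rewrite addnS !ffactnSr IH subnDA mulnA.
Qed.

Section CoordinateSlice.
Variables (R : rcfType) (n : nat) (p : {mpoly R[i][n]}) (i : 'I_n) (L : nat).
Variable z : 'I_n -> R[i].
Hypothesis le_L : {in msupp p, forall m : 'X_{1..n}, L <= m i}%N.
Local Notation C := R[i].
Local Notation u m := (\prod_j set_coord z i 1 j ^+ m j).

Definition coord_slice : {poly C} := \sum_(m <- msupp p) (p@_m * u m) *: 'X^(m i - L).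

Lemma meval_diag_op_set_coord c t : (diag_op c p).@[set_coord z i t] =
  \sum_(m <- msupp p) c m * (p@_m * u m) * t ^+ m i.
Proof.
rewrite meval_diag_op; apply: eq_bigr => m _.
by rewrite [in LHS]prod_set_coord; ring.
Qed.

Lemma horner_coord_slice s : coord_slice.[s] * s ^+ L = p.@[set_coord z i s].
Proof.
rewrite -[p]diag_op1 meval_diag_op_set_coord horner_sum mulr_suml.
apply: eq_big_seq => m m_supp; rewrite hornerZ hornerXn mul1r -mulrA -exprD.
by rewrite subnK ?le_L.
Qed.

Lemma horner_coord_slice0 :
  coord_slice.[0] * z i ^+ L = (diag_op (fun m => 0 ^+ (m i - L)) p).@[z].
Proof.
rewrite -(meval_eq _ (set_coord_id z i)) meval_diag_op_set_coord horner_sum mulr_suml.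
apply: eq_big_seq => m m_supp; rewrite hornerZ hornerXn.
have -> : z i ^+ m i = z i ^+ L * z i ^+ (m i - L) by rewrite -exprD subnKC ?le_L.
by case: (m i - L)%N => [|k]; rewrite ?expr0n /=; ring.
Qed.

Lemma meval_diag_op_ffact_coord b : z i != 0 -> (L <= b)%N ->
  (diag_op (fun m => (b ^_ m i)%:R) p).@[z] =
  (b ^_ L)%:R * z i ^+ L * ((diffop coord_slice 'X^(b - L)).[(z i)^-1] * z i ^+ (b - L)).
Proof.
move=> zi_neq0 le_Lb; rewrite -(meval_eq _ (set_coord_id z i)) meval_diag_op_set_coord.
rewrite diffop_sum horner_sum mulr_suml mulr_sumr; apply: eq_big_seq => m m_supp.
rewrite diffopZ hornerZ -[_ * _ * z i ^+ (b - L)]mulrA horner_diffop_XnXn_inv //.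
have -> : m i = (L + (m i - L))%N by rewrite subnKC ?le_L.
by rewrite ffactD natrM exprD addKn; ring.
Qed.

End CoordinateSlice.

Section FallingFactorialOperators.
Variables (R : rcfType) (n : nat).
Local Notation C := R[i].

Lemma preserves_stability_ffact_coord (i : 'I_n) (b : nat) :
  preserves_stability (diag_op (fun m : 'X_{1..n} => (b ^_ m i)%:R : C)).
Proof.
move=> p p_st.
have exL : exists k, has (fun m : 'X_{1..n} => m i == k) (msupp p).
  move: (stable_neq0 p_st); rewrite -msupp_eq0.
  by case: (msupp p) => // m0 s _; exists (m0 i); rewrite /= eqxx.
have [L hasL minL] := ex_minnP exL.
have le_L : {in msupp p, forall m : 'X_{1..n}, L <= m i}%N.
  by move=> m m_supp; apply: minL; apply/hasP; exists m.
have [lt_bL|le_Lb] := ltnP b L.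
  left; apply/mpolyP => m; rewrite mcoeff_diag_op mcoeff0.
  have [m_supp|/memN_msupp_eq0 ->] := boolP (m \in msupp p); last by rewrite mulr0.
  by rewrite ffact_small ?mul0r // (leq_trans lt_bL) ?le_L.
right => z z_up; have zi_neq0 : z i != 0.
  by apply: contraTneq (z_up i) => ->; rewrite raddf0 ltxx.
rewrite (meval_diag_op_ffact_coord le_L) //.
rewrite !mulf_neq0 ?expf_neq0 // ?pnatr_eq0 -?lt0n ?ffact_gt0 //.
apply: lower_zero_free_diffop_Xn; last exact: Im_inv_lt0.
  apply: contraNneq (stable_lowest_coord_part p_st le_L hasL z_up).
  by rewrite -horner_coord_slice0 // => ->; rewrite mul0r.
move=> s s_up; apply: contraNneq (p_st _ (upper_set_coord i z_up s_up)).
by rewrite -(horner_coord_slice z le_L) => ->; rewrite mul0r.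
Qed.

Lemma preserves_stability_pochf (beta : 'X_{1..n}) :
  preserves_stability (diag_op (fun alpha => (pochf alpha beta)%:R : C)).
Proof.
apply: (@eq_preserves_stability_diag_op _ _ (fun alpha => \prod_k (beta k ^_ alpha k)%:R)).
  by move=> alpha; rewrite /pochf natr_prod.
by apply: preserves_stability_diag_op_prod => k; apply: preserves_stability_ffact_coord.
Qed.

(* Any positive value would do for [beta k = 0]: [pochf] vanishes there unless [alpha k = 0]. *)
Lemma Jcoef_scale_pochf (alpha beta : 'X_{1..n}) :
  Jcoef C alpha beta =
  \prod_k ((if beta k == 0%N then 1 else (beta k)%:R^-1)%:C%C) ^+ alpha k *
  (pochf alpha beta)%:R.
Proof.
rewrite /Jcoef mulrC.
have [->|poch_neq0] := eqVneq (pochf alpha beta) 0%N; first by rewrite !mulr0.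
congr (_ * _); apply: eq_bigr => k _.
have : (alpha k <= beta k)%N.
  by rewrite -ffact_gt0 lt0n; apply: contraNneq poch_neq0; rewrite /pochf (bigD1 k) //= => ->.
case: eqP => [->|_]; first by rewrite leqn0 => /eqP ->; rewrite !expr0 invr1.
by rewrite -exprVn fmorphV rmorph_nat.
Qed.

End FallingFactorialOperators.

Theorem lemma5p2 (R : rcfType) (n : nat) (beta : 'X_{1..n}) :
  preserves_stability (diag_op (fun alpha => Jcoef R[i] alpha beta)) /\
  preserves_stability (diag_op (fun alpha => (pochf alpha beta)%:R : R[i])).
Proof.
have poch_st := @preserves_stability_pochf R n beta; split => //.
have J_def alpha := esym (@Jcoef_scale_pochf R n alpha beta).
apply: eq_preserves_stability_diag_op J_def _.
apply: preserves_stability_diag_opM poch_st; apply: preserves_stability_scale => k.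
by case: eqP => // /eqP; rewrite invr_gt0 ltr0n lt0n.
Qed.
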